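(* Let $\{\nu_n\}_{n\in\mathbb N}$ be probability measures on $\mathbb R^d$ with densities $\{p_n\}$. Suppose there are constants $\delta>0$, $c>0$, $N_0\in\mathbb N$ such that for all $n>N_0$: (1) $p_n$ has a unique maximizer $\hat\theta_n$; (2) $\nu_n(B_1(\hat\theta_n))>1/2$; (3) $p_n$ is positive and differentiable on $B_\delta(\hat\theta_n)$ and $$\sup_{\|\theta-\hat\theta_n\|\le\delta}\ \sup_{\|v\|=1}\frac{|\nabla_v p_n(\theta)|}{p_n(\theta)}\le n^c.$$ Let $\lambda_n$ be the density of the uniform distribution on $B_{n^{-c}}(\hat\theta_n)$. Then there is an absolute constant $C$ (not depending on $n,c,d$; one may take $C=2e$) such that for all $n>\max(N_0,\delta^{-1/c})$ and all $\theta\in B_{n^{-c}}(\hat\theta_n)$, $$\frac{\lambda_n(\theta)}{p_n(\theta)}\le C\,n^{cd}.$$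
   Context: $B_r(x)=\{y:\|x-y\|\le r\}$ is the closed Euclidean ball of radius $r$ about $x$; $\nabla_v$ denotes the directional derivative in direction $v$. *)

From HB Require Import structures.
From mathcomp Require Import all_boot all_order all_algebra.
From mathcomp Require Import all_classical all_reals all_analysis.
Set Implicit Arguments. Unset Strict Implicit. Unset Printing Implicit Defensive.
Import Order.TTheory GRing.Theory Num.Theory.
Import numFieldNormedType.Exports.
Local Open Scope classical_set_scope.
Local Open Scope ring_scope.

Section Defs.
Context {R : realType}.

Definition enorm (d : nat) (x : 'rV[R]_d) : R :=
  Num.sqrt (\sum_(i < d) x ord0 i ^+ 2).

Definition eball (d : nat) (x : 'rV[R]_d) (r : R) : set 'rV[R]_d :=
  [set y | enorm (x - y) <= r].

(* identification of d-tuples (carrying the product Borel sigma-algebra)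
   with row vectors *)
Definition torow {d : nat} (t : d.-tuple R) : 'rV[R]_d := \row_(i < d) tnth t i.

(* d-dimensional Lebesgue measure on d.-tuple R, built as the iterated
   product of the one-dimensional Lebesgue measure:
   leb_0 = Dirac mass at the empty tuple,
   leb_(n+1)(A) = (lebesgue_measure \x leb_n) {(a, t) | a :: t \in A}. *)
Fixpoint lebRd (n : nat) : set (n.-tuple R) -> \bar R :=
  match n return set (n.-tuple R) -> \bar R with
  | 0 => fun A => \d_([tuple]) A
  | n'.+1 => fun A =>
      ((@lebesgue_measure R) \x (lebRd (n:=n')))%E
        [set p : R * n'.-tuple R | A [tuple of p.1 :: p.2]]
  end.

Definition lebV (d : nat) (A : set 'rV[R]_d) : \bar R :=
  lebRd (n:=d) (torow @^-1` A).

Definition dens_measure (d : nat) (p : 'rV[R]_d -> R) (A : set 'rV[R]_d) : \bar R :=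
  (\int[lebRd (n:=d)]_(x in torow @^-1` A) (p (torow x))%:E)%E.

Definition is_prob_density (d : nat) (p : 'rV[R]_d -> R) : Prop :=
  measurable_fun setT (fun x : d.-tuple R => p (torow x)) /\
  (forall x, 0 <= p x) /\
  dens_measure p setT = 1%E.

Definition unif_density (d : nat) (x0 : 'rV[R]_d) (r : R) (y : 'rV[R]_d) : R :=
  \1_(eball x0 r) y / fine (lebV (eball x0 r)).

End Defs.

From HB Require Import structures.
From mathcomp Require Import all_boot all_order all_algebra.
From mathcomp Require Import all_classical all_reals all_analysis.
From mathcomp Require Import measurable_realfun lra.
Set Implicit Arguments. Unset Strict Implicit. Unset Printing Implicit Defensive.
Import Order.TTheory GRing.Theory Num.Theory.
Import numFieldNormedType.Exports.
Local Open Scope classical_set_scope.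
Local Open Scope ring_scope.

(* Write r = n^-c and K = n^c, so that r K = 1 and, for n > delta^(-1/c),
   r <= delta.  The proof combines two estimates.
   - Mass versus volume: p <= p(mode) everywhere, so
       1/2 < nu(B_1(mode)) <= p(mode) vol(B_1(mode)),
     and since vol(B_r) = r^d vol(B_1) the uniform density on B_r is at most
     2 p(mode) / r^d.
   Together: lambda(th) / p(th) <= 2 p(mode) / (r^d p(th)) <= 2 e n^(c d). *)

(* The image measure of m under a measurable map f, packaged as a measure
   (its measure structure is the library instance on pushforward). *)
Definition pushforward_measure {d1 d2} {T1 : measurableType d1}
    {T2 : measurableType d2} {R : realType} (m : {measure set T1 -> \bar R})
    {f : T1 -> T2} (mf : measurable_fun setT f) : {measure set T2 -> \bar R} :=
  @measure_function_pushforward__canonical__measure_function_Measure _ _ _ _ _ m f mf.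

Section affine_line.
Context {R : realType}.
Local Notation leb := (@lebesgue_measure R).

Lemma affine_preimage_itv (a e u v : R) : 0 < a ->
  (fun x : R => a * x + e) @^-1` `]u, v]%classic =
  `](u - e) / a, (v - e) / a]%classic.
Proof.
move=> a0; apply/seteqP; split => x /=; rewrite !in_itv /= => /andP[h1 h2];
  apply/andP; split.
- by rewrite ltr_pdivrMr // mulrC ltrBlDr.
- by rewrite ler_pdivlMr // mulrC lerBrDr.
- by rewrite -ltrBlDr mulrC -ltr_pdivrMr.
- by rewrite -lerBrDr mulrC -ler_pdivlMr.
Qed.

(* Stated on measurableTypeR R, the measurable structure of Lebesgue measure. *)
Lemma measurable_affine (a e : R) :
  measurable_fun [set: measurableTypeR R]
    (fun x : measurableTypeR R => a * x + e : measurableTypeR R).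
Proof. by apply: measurable_funD => //; apply: measurable_funM. Qed.

(* Lebesgue measure transforms under x |-> a x + e by the factor 1/a;
   by uniqueness of Lebesgue measure it suffices to check half-open
   intervals. *)
Lemma lebesgue_measure_affine (a e : R) (A : set R) : 0 < a -> measurable A ->
  pushforward leb (fun x : R => a * x + e) A = ((a^-1)%:E * leb A)%E.
Proof.
move=> a0 mA; have a_ge0 : 0 <= a := ltW a0.
pose mu := pushforward_measure leb (measurable_affine a e).
suff -> : leb A = mscale (NngNum a_ge0) mu A.
  by rewrite /mscale /= muleA -EFinM mulVf ?gt_eqF ?mul1e.
apply: lebesgue_measure_unique => //.
move=> X /ocitvP[->|[[u v]] /= uv ->]; first by rewrite !measure0.
rewrite /mscale /= /pushforward /= (affine_preimage_itv e u v a0).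
rewrite !lebesgue_measure_itv /=.
have uv_a : (u - e) / a < (v - e) / a by rewrite ltr_pM2r ?invr_gt0 // ltrBlDr subrK.
rewrite !lte_fin uv uv_a -!EFinB -EFinM; congr (_%:E).
by rewrite -mulrBl opprD addrACA subrr addr0 mulrCA divff ?mulr1 // gt_eqF.
Qed.

Lemma ge0_integral_affine (a e : R) (G : measurableTypeR R -> \bar R) : 0 < a ->
  measurable_fun setT G -> (forall x, (0 <= G x)%E) ->
  (\int[leb]_x G (a * x + e)%R = (a^-1)%:E * \int[leb]_x G x)%E.
Proof.
move=> a0 mG G0; have ainv_ge0 : 0 <= a^-1 by rewrite invr_ge0 ltW.
have := ge0_integral_pushforward (measurable_affine a e) leb measurableT mG
  (fun y _ => G0 y).
rewrite preimage_setT => <-.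
transitivity (\int[mscale (NngNum ainv_ge0) leb]_x G x)%E.
  refine (@eq_measure_integral _ _ _ setT _
    (pushforward_measure leb (measurable_affine a e)) G _) => B mB _.
  exact: lebesgue_measure_affine.
by rewrite ge0_integral_mscale.
Qed.

End affine_line.

(* A pushforward along a map with a measurable left inverse keeps
   sigma-finiteness: pull the exhausting sequence back along the inverse. *)
Lemma sigma_finite_pushforward {d1 d2} {T1 : measurableType d1}
    {T2 : measurableType d2} {R : realType}
    {m : {measure set T1 -> \bar R}} {f : T1 -> T2} {g : T2 -> T1} :
  sigma_finite setT m -> measurable_fun setT g -> cancel f g ->
  sigma_finite setT (pushforward m f).
Proof.
move=> [F FT Fm] mg fK.
exists (fun k => g @^-1` F k); first by rewrite -preimage_bigcup -FT preimage_setT.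
move=> k; have [mFk Fk_fin] := Fm k; split.
  by rewrite -[X in measurable X]setTI; exact: mg.
rewrite /pushforward; suff -> : f @^-1` (g @^-1` F k) = F k by [].
by apply/seteqP; split => x /=; rewrite fK.
Qed.

(* The product of two sigma-finite measures is sigma-finite, exhausted by
   products of exhausting sequences (taken nondecreasing). *)
Lemma sigma_finite_product {d1 d2} {T1 : measurableType d1}
    {T2 : measurableType d2} {R : realType}
    (m1 : {sigma_finite_measure set T1 -> \bar R})
    (m2 : {sigma_finite_measure set T2 -> \bar R}) :
  sigma_finite setT (m1 \x m2)%E.
Proof.
have /sigma_finiteP[F [FT F_nd F_fin]] := sigma_finiteT m1.
have /sigma_finiteP[G [GT G_nd G_fin]] := sigma_finiteT m2.
exists (fun k => F k `*` G k).
  apply/seteqP; split => [[x y] _|//].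
  have [i _ Fix] : (\bigcup_i F i) x by rewrite -FT.
  have [j _ Gjy] : (\bigcup_j G j) y by rewrite -GT.
  exists (maxn i j) => //; split.
  - by move: x Fix; apply/subsetPset/F_nd/leq_maxl.
  - by move: y Gjy; apply/subsetPset/G_nd/leq_maxr.
move=> k; have [mFk Fk_fin] := F_fin k; have [mGk Gk_fin] := G_fin k.
split; first exact: measurableX.
by rewrite product_measure1E // lte_mul_pinfty // ge0_fin_numE.
Qed.

Section tuple_lebesgue.
Context {R : realType}.
Local Notation leb := (@lebesgue_measure R).
Variables (n : nat) (m : {sigma_finite_measure set (n.-tuple R) -> \bar R}).

Definition consf (p : measurableTypeR R * n.-tuple R) : n.+1.-tuple R :=
  [tuple of p.1 :: p.2].
Definition splitf (t : n.+1.-tuple R) : measurableTypeR R * n.-tuple R :=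
  (thead t, [tuple of behead t]).

Lemma measurable_consf : measurable_fun setT consf.
Proof. exact: (@measurable_cons _ _ _ R fst n snd). Qed.

Lemma measurable_splitf : measurable_fun setT splitf.
Proof.
apply: measurable_fun_pair; last exact: measurable_behead.
exact: (@measurable_tnth _ R n.+1 ord0).
Qed.

Lemma consfK : cancel consf splitf.
Proof. by case=> a t; congr pair; apply: val_inj. Qed.

(* The measure on R^(n+1) obtained from leb \x m; this is the recursion
   step in the definition of lebRd. *)
Definition consm : set (n.+1.-tuple R) -> \bar R :=
  pushforward (leb \x m)%E consf.

HB.instance Definition _ :=
  Measure.copy consm (pushforward_measure (leb \x m)%E measurable_consf).

HB.instance Definition _ := @Measure_isSigmaFinite.Build _ _ _ consm
  (sigma_finite_pushforward (sigma_finite_product leb m) measurable_splitf consfK).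

End tuple_lebesgue.

Lemma lebRd_measure {R : realType} (n : nat) :
  {m : {sigma_finite_measure set (n.-tuple R) -> \bar R} | lebRd (n:=n) = m}.
Proof.
elim: n => [|n [m IH]]; first by exists (\d_([tuple] : 0.-tuple R))%R.
by exists (consm m); apply/funext => A /=; rewrite IH.
Qed.

Section tuple_scaling.
Context {R : realType}.
Local Notation leb := (@lebesgue_measure R).

Definition affine_tuple {n : nat} (a : R) (e : n.-tuple R) (t : n.-tuple R) :
    n.-tuple R :=
  [tuple a * tnth t i + tnth e i | i < n].

Lemma affine_tuple_cons n (a x : R) (e : n.+1.-tuple R) (t : n.-tuple R) :
  affine_tuple a e [tuple of x :: t] =
  [tuple of (a * x + thead e) :: affine_tuple a [tuple of behead e] t].
Proof.
apply: eq_from_tnth => i; rewrite tnth_mktuple.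
case: (unliftP ord0 i) => [j ->|->]; last by rewrite /thead !(tnth_nth 0).
rewrite [in RHS](tnthS (a * x + thead e)) tnth_mktuple (tnthS x); congr (_ + _).
by rewrite !(tnth_nth 0) /= nth_behead.
Qed.

(* Induction on n: by Fubini (the definition of the product measure) the
   sections of the preimage are preimages of sections, to which the
   induction hypothesis applies, and the remaining one-dimensional integral
   is handled by ge0_integral_affine. *)
Lemma lebRd_affine (n : nat) (a : R) (e : n.-tuple R) (A : set (n.-tuple R)) :
  0 < a -> measurable A ->
  lebRd (n:=n) (affine_tuple a e @^-1` A) = (((a^-1) ^+ n)%:E * lebRd (n:=n) A)%E.
Proof.
move=> a0; elim: n e A => [|n IH] e A mA.
  rewrite expr0 mul1e; congr lebRd; apply/seteqP; split => t /=;
    by rewrite (tuple0 (affine_tuple a e t)) (tuple0 t).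
have [m mE] := lebRd_measure (R:=R) n; rewrite mE in IH.
rewrite /= mE /product_measure1 /=.
have mA' : measurable (@consf R n @^-1` A).
  by rewrite -[X in measurable X]setTI; apply: measurable_consf.
pose G u := m (xsection (@consf R n @^-1` A) u).
have mG : measurable_fun setT G by exact: measurable_fun_xsection.
transitivity (\int[leb]_x ((a^-1 ^+ n)%:E * G (a * x + thead e)%R))%E.
  apply: eq_integral => x _.
  rewrite /G -(IH [tuple of behead e]); last exact: measurable_xsection.
  congr (m _); apply/seteqP.
  by split => t /=; rewrite /xsection /= !inE /= affine_tuple_cons.
rewrite ge0_integralZl_EFin //; first last.
- by rewrite exprn_ge0 // invr_ge0 ltW.
- by apply: measurableT_comp => //; exact: measurable_affine.
by rewrite ge0_integral_affine // muleA -EFinM exprSr.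
Qed.

End tuple_scaling.

Section euclidean_balls.
Context {R : realType}.

Lemma enorm_ge0 d (v : 'rV[R]_d) : 0 <= enorm v.
Proof. exact: sqrtr_ge0. Qed.

Lemma enormZ d (k : R) (v : 'rV[R]_d) : enorm (k *: v) = `|k| * enorm v.
Proof.
rewrite /enorm (eq_bigr (fun i => k ^+ 2 * v ord0 i ^+ 2)); last first.
  by move=> i _; rewrite mxE exprMn.
by rewrite -mulr_sumr sqrtrM ?sqr_ge0 // sqrtr_sqr.
Qed.

Lemma enormN d (v : 'rV[R]_d) : enorm (- v) = enorm v.
Proof. by rewrite -scaleN1r enormZ normrN normr1 mul1r. Qed.

Lemma enorm_eq0 d (v : 'rV[R]_d) : enorm v = 0 -> v = 0.
Proof.
move=> /eqP; rewrite sqrtr_eq0 => sum_le0.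
have /eqP : \sum_(i < d) v ord0 i ^+ 2 = 0.
  by apply/eqP; rewrite eq_le sum_le0 sumr_ge0 // => i _; exact: sqr_ge0.
rewrite psumr_eq0 => [/allP coord0|i _]; last exact: sqr_ge0.
apply/rowP => i; rewrite mxE; apply/eqP; rewrite -sqrf_eq0.
by apply: coord0; rewrite mem_index_enum.
Qed.

(* Closed balls, read on tuples, are measurable: the distance to the
   center is a continuous function of finitely many coordinates. *)
Lemma measurable_ball d (x : 'rV[R]_d) (r : R) :
  measurable (torow @^-1` eball x r).
Proof.
have mdist : measurable_fun setT (fun t : d.-tuple R => enorm (x - torow t)).
  apply: measurableT_comp.
    exact (continuous_measurable_fun (@sqrt_continuous R)).
  rewrite (_ : (fun t => _) = fun t => \sum_(i < d) (x ord0 i - tnth t i) ^+ 2).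
    apply: measurable_sum => i; apply: measurable_funX.
    by apply: measurable_funB => //; exact: measurable_tnth.
  by apply/funext => t; apply: eq_bigr => i _; rewrite !mxE.
have := mdist measurableT _ (@measurable_itv R `]-oo, r]).
rewrite setTI; congr measurable; apply/seteqP; split => t /=;
  by rewrite in_itv.
Qed.

Lemma ball_affine d (x : 'rV[R]_d) (r : R) : 0 < r ->
  torow @^-1` eball x r =
  affine_tuple r^-1 [tuple x ord0 i - r^-1 * x ord0 i | i < d]
    @^-1` (torow @^-1` eball x 1).
Proof.
move=> r0.
have shrink t : x - torow (affine_tuple r^-1
    [tuple x ord0 i - r^-1 * x ord0 i | i < d] t) = r^-1 *: (x - torow t).
  apply/rowP => i; rewrite !mxE !tnth_mktuple.
  by rewrite mulrBr opprD addrA opprB addrC addrA subrK.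
have rinv_ge0 : 0 <= r^-1 by rewrite invr_ge0 ltW.
apply/seteqP; split => t /=;
  by rewrite /eball /= shrink enormZ (ger0_norm rinv_ge0) ler_pdivrMl // mulr1.
Qed.

Lemma lebV_ball d (x : 'rV[R]_d) (r : R) : 0 < r ->
  lebV (eball x r) = ((r ^+ d)%:E * lebV (eball x 1))%E.
Proof.
move=> r0; rewrite /lebV ball_affine // lebRd_affine ?invr_gt0 //.
  by rewrite invrK.
exact: measurable_ball.
Qed.

End euclidean_balls.

Section density_bounds.
Context {R : realType}.

Lemma dens_measure_le d (p : 'rV[R]_d -> R) (A : set 'rV[R]_d) (M : R) :
  is_prob_density p -> (forall y, p y <= M) -> measurable (torow @^-1` A) ->
  (dens_measure p A <= M%:E * lebV A)%E.
Proof.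
move=> [mp [p_ge0 _]] pM mA; have [m mE] := lebRd_measure (R:=R) d.
rewrite /dens_measure /lebV mE -integral_cst //.
apply: ge0_le_integral => //.
- by move=> t _; rewrite lee_fin.
- by apply/measurable_EFinP; exact: measurable_funS mp.
- by move=> t _; rewrite lee_fin.
Qed.

(* If M vol(B_1(x0)) > 1/2, the uniform density on B_r(x0) is at most
   2 M / r^d.  (When the unit ball has infinite volume the uniform density
   is 0 by the convention fine(+oo) = 0.) *)
Lemma unif_density_le d (x0 y : 'rV[R]_d) (r M : R) : 0 < r -> 0 <= M ->
  ((2^-1)%:E < M%:E * lebV (eball x0 1))%E ->
  unif_density x0 r y <= 2 * M / r ^+ d.
Proof.
move=> r0 M0 mass; have rd0 : 0 < r ^+ d by rewrite exprn_gt0.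
have bound_rhs : 0 <= 2 * M / r ^+ d by rewrite divr_ge0 ?mulr_ge0 // ltW.
have ind_le1 : \1_(eball x0 r) y <= 1 :> R.
  by rewrite indicE; case: (_ \in _).
rewrite /unif_density lebV_ball //.
move: mass; case: (lebV (eball x0 1)) => [v| |] /= mass; last 2 first.
- by rewrite mulry gtr0_sg // mul1e /= invr0 mulr0.
- by rewrite mulrNy gtr0_sg // mul1e /= invr0 mulr0.
move: mass; rewrite -EFinM lte_fin => mass.
have v0 : 0 < v by rewrite ltNge; apply/negP => v_le0; nra.
rewrite invfM mulrA mulrAC ler_pM2r ?invr_gt0 // ler_pdivrMr //.
nra.
Qed.

End density_bounds.

Section growth_near_mode.
Context {R : realType}.

Lemma line_is_derive (V : normedModType R) (f : V -> R) (x w : V) (t : R) :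
  derivable f (t *: w + x) w ->
  is_derive t 1 (fun s => f (s *: w + x)) ('D_w f (t *: w + x)).
Proof.
have quotE : (fun s : R => s^-1 *: (((fun s => f (s *: w + x)) \o shift t) (s *: 1)
      - f (t *: w + x))) =
    (fun s => s^-1 *: ((f \o shift (t *: w + x)) (s *: w) - f (t *: w + x))).
  apply/funext => s /=; congr (_ *: (f _ - _)).
  by rewrite [s *: 1]mulr1 scalerDl addrA.
by move=> dw; apply: DeriveDef; rewrite ?/derivable ?/derive quotE.
Qed.

(* Gronwall on [0, 1]: if h' >= -h then h 0 <= e h 1.  Apply the mean
   value theorem to the nondecreasing function h(t) e^t. *)
Lemma exp_growth (h dh : R -> R) :
  (forall t : R, 0 <= t <= 1 -> is_derive t 1 h (dh t)) ->
  (forall t : R, 0 <= t <= 1 -> - h t <= dh t) ->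
  h 0 <= h 1 * expR 1.
Proof.
move=> hd hb.
have he_derive (t : R) : 0 <= t <= 1 ->
    is_derive t 1 (h * expR) (h t *: expR t + expR t *: dh t).
  by move=> t01; have := hd t t01 => ?; exact: is_deriveM.
have [c c01 mvt] : exists2 c, c \in `[0, 1]%R &
    (h * expR) 1 - (h * expR) 0 =
    (fun t => h t *: expR t + expR t *: dh t) c * (1 - 0).
  apply: MVT_segment; first exact: ler01.
    by move=> t; rewrite in_itv /= => /andP[? ?]; apply: he_derive; rewrite !ltW.
  apply: derivable_within_continuous => t; rewrite in_itv /= => t01.
  by have [] := he_derive t t01.
have : h 1 * expR 1 - h 0 * expR 0 = h c * expR c + expR c * dh c.
  by move: mvt; rewrite /= subr0 mulr1.
rewrite expR0 mulr1 => /eqP; rewrite subr_eq => /eqP ->.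
move: c01; rewrite in_itv /= => c01.
rewrite lerDr [expR c * _]mulrC -mulrDl mulr_ge0 ?expR_ge0 //.
by rewrite -lerBlDl sub0r; exact: hb.
Qed.

Lemma directional_derive_le d (P : 'rV[R]_d -> R) (y w : 'rV[R]_d) (K : R) :
  0 <= K -> differentiable P y -> 0 < P y ->
  (forall v : 'rV[R]_d, enorm v = 1 -> `|'D_v P y| / P y <= K) ->
  `|'D_w P y| <= enorm w * (K * P y).
Proof.
move=> K0 dP Py bound.
have [w0|w_neq0] := eqVneq (enorm w) 0.
  by rewrite w0 mul0r (enorm_eq0 w0) deriveE // linear0 normr0.
have w_gt0 : 0 < enorm w by rewrite lt_neqAle eq_sym w_neq0 enorm_ge0.
set v := (enorm w)^-1 *: w.
have unit_v : enorm v = 1.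
  by rewrite enormZ ger0_norm ?invr_ge0 ?enorm_ge0 // mulVf.
have Dw : 'D_w P y = enorm w * 'D_v P y.
  by rewrite !deriveE // /v linearZ /= /GRing.scale /= mulrA mulfV ?mul1r.
rewrite Dw normrM ger0_norm ?enorm_ge0 // ler_wpM2l ?enorm_ge0 //.
by rewrite -ler_pdivrMr //; exact: bound.
Qed.

(* Along the segment
   h(s) = P(th0 + s (th - th0)) satisfies |h'| <= |th - th0| K h <= h. *)
Lemma mode_growth d (P : 'rV[R]_d -> R) (th0 th : 'rV[R]_d) (r K : R) :
  0 <= K -> r * K <= 1 -> enorm (th0 - th) <= r ->
  (forall y, enorm (th0 - y) <= r -> 0 < P y /\ differentiable P y /\
     forall v : 'rV[R]_d, enorm v = 1 -> `|'D_v P y| / P y <= K) ->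
  P th0 <= P th * expR 1.
Proof.
move=> K0 rK th_near local; set w := th - th0.
have w_le_r : enorm w <= r by rewrite -enormN opprB.
have on_segment (s : R) : 0 <= s <= 1 -> enorm (th0 - (s *: w + th0)) <= r.
  move=> /andP[s0 s1]; rewrite opprD addrCA subrr addr0 enormN enormZ ger0_norm //.
  by apply: le_trans w_le_r; rewrite ler_piMl ?enorm_ge0.
have -> : th = 1 *: w + th0 by rewrite scale1r /w subrK.
have -> : P th0 = P (0 *: w + th0) by rewrite scale0r add0r.
apply: (@exp_growth (fun s => P (s *: w + th0)) (fun s => 'D_w P (s *: w + th0))).
  move=> t t01; apply: line_is_derive; apply: diff_derivable.
  by have [_ []] := local _ (on_segment t t01).
move=> t t01; have [Py [dP bound]] := local _ (on_segment t t01).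
rewrite lerNl; apply: le_trans (ler_norm _) _; rewrite normrN.
apply: le_trans (directional_derive_le w K0 dP Py bound) _.
rewrite mulrA ler_piMl ?(ltW Py) //.
exact: le_trans (ler_wpM2r K0 w_le_r) rK.
Qed.

End growth_near_mode.

Lemma radius_le_delta {R : realType} (delta c x : R) :
  0 < delta -> 0 < c -> 0 < x -> delta `^ (- c^-1) < x -> (x `^ c)^-1 <= delta.
Proof.
move=> delta0 c0 x0 x_large.
have := gt0_ltr_powR c0 (powR_ge0 delta (- c^-1)) (ltW x0) x_large.
rewrite -powRrM mulNr mulVf ?gt_eqF // (powR_inv1 (ltW delta0)) => lt_inv.
by rewrite -[delta]invrK ltW // ltf_pV2 ?posrE ?invr_gt0 // powR_gt0.
Qed.

Theorem lemmaA1 (R : realType) :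
  exists C : R, forall (d : nat) (p : nat -> 'rV[R]_d -> R)
    (thetahat : nat -> 'rV[R]_d) (delta c : R) (N0 : nat),
  0 < delta -> 0 < c ->
  (forall n, is_prob_density (p n)) ->
  (forall n, (N0 < n)%N ->
     (* (1) thetahat n is the unique maximizer of p n *)
     ((forall th, p n th <= p n (thetahat n)) /\
      (forall th, p n th = p n (thetahat n) -> th = thetahat n)) /\
     (* (2) *)
     (dens_measure (p n) (eball (thetahat n) 1) > (2^-1)%:E)%E /\
     (* (3) *)
     (forall th, eball (thetahat n) delta th ->
        0 < p n th /\ differentiable (p n) th /\
        forall v : 'rV[R]_d, enorm v = 1 ->
          `|'D_v (p n) th| / p n th <= n%:R `^ c)) ->
  forall n : nat, (N0 < n)%N -> delta `^ (- c^-1) < n%:R ->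
  forall th, eball (thetahat n) (n%:R `^ (- c)) th ->
    unif_density (thetahat n) (n%:R `^ (- c)) th / p n th
      <= C * n%:R `^ (c * d%:R).
Proof.
exists (2 * expR 1) => d p th0 delta c N0 delta0 c0 dens hyp n nN0 n_large th.
have [[is_mode _] [mass local]] := hyp n nN0.
have n0 : 0 < n%:R :> R by rewrite ltr0n; exact: leq_ltn_trans nN0.
set K := n%:R `^ c; have K0 : 0 < K by exact: powR_gt0.
rewrite powRN -/K powRrM powR_mulrn ?powR_ge0 // -/K => th_near.
have r_le_delta := radius_le_delta delta0 c0 n0 n_large.
have local_r y : enorm (th0 n - y) <= K^-1 -> _ :=
  fun near_y => local y (le_trans near_y r_le_delta).
have rK : K^-1 * K <= 1 by rewrite mulVf ?gt_eqF.
have growth := mode_growth (ltW K0) rK th_near local_r.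
have p_th : 0 < p n th by have [] := local_r th th_near.
have mode_ge0 : 0 <= p n (th0 n) := le_trans (ltW p_th) (is_mode th).
have r0 : 0 < K^-1 by rewrite invr_gt0.
have unif := unif_density_le th r0 mode_ge0
  (lt_le_trans mass (dens_measure_le (dens n) is_mode (measurable_ball _ _))).
rewrite ler_pdivrMr //; apply: le_trans unif _.
rewrite exprVn invrK.
have Kd0 : 0 < K ^+ d by rewrite exprn_gt0.
nra.
Qed.
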